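(* Let $A$ be a finite set with $q:=|A|\ge 2$ and $n\ge 2$. The alternating group $\mathrm{Alt}(A^n)$ is generated by the instructions that are even permutations of $A^n$, unless $q=2$ and $n\in\{2,3\}$.
   Context: Any $f\in\mathrm{Sym}(A^n)$ is written $f(x)=(f_1(x),\ldots,f_n(x))$ with coordinate functions $f_i:A^n\to A$; the $i$-th coordinate function is trivial if $f_i(x)=x_i$ for all $x$. An instruction is a permutation of $A^n$ with at most one nontrivial coordinate function (the identity counts as an instruction). (The paper phrases the conclusion as: $\mathrm{Alt}(A^n)$ is internally computable, meaning it is generated by $\mathrm{Alt}(A^n)\cap\mathcal{I}$, where $\mathcal{I}$ is the set of instructions.) *)

From mathcomp Require Import all_boot all_order all_fingroup all_solvable alt.
Set Implicit Arguments. Unset Strict Implicit. Unset Printing Implicit Defensive.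

(* A^n is represented as the finite type {ffun 'I_n -> A}; for x in A^n,
   x j is the j-th coordinate and (f x) j is the coordinate function f_j. *)
Definition instruction (A : finType) (n : nat) (f : {perm {ffun 'I_n -> A}}) : bool :=
  [exists i : 'I_n, forall j : 'I_n, forall x : {ffun 'I_n -> A},
     (j != i) ==> (f x j == x j)].

From mathcomp Require Import all_boot all_order all_fingroup all_solvable alt.
From mathcomp Require Import zify.
Set Implicit Arguments. Unset Strict Implicit. Unset Printing Implicit Defensive.

(* Call transpositions (x y) and (u v) of A^n linked when (x y)(u v) lies in
   the group H generated by the even instructions.  Linkedness is an
   equivalence relation, and conjugating a linked pair by an element of H
   gives a linked pair.  Two transpositions along lines of the same direction
   are linked, their product being an even instruction.  Once, for any two
   directions i <> j, some i-edge is linked to some j-edge, all edges are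
   linked, every transposition is linked to an edge (induction on the Hamming
   distance), and so every product of two transpositions, hence every even
   permutation, lies in H.  To link the directions, conjugate a linked pair of
   j-edges by an even i-instruction g moving one of their endpoints: a 3-cycle
   on an i-line when |A| > 2, and a product of two parallel i-edge
   transpositions when |A| = 2, which needs two spare coordinates, i.e. n > 3. *)

Local Open Scope group_scope.

Section InstructionGroup.

Variables (A : finType) (n : nat).

Local Notation cube := {ffun 'I_n -> A}.

Definition instr_group := <<[set f in Alt cube | instruction f]>>.

Definition linked (x y u v : cube) := tperm x y * tperm u v \in instr_group.

Definition agree_off (i : 'I_n) (x y : cube) := forall j, j != i -> x j = y j.

Definition set_coord (x : cube) (i : 'I_n) (v : A) : cube :=
  [ffun j => if j == i then v else x j].

Lemma set_coord_at x i v : set_coord x i v i = v.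
Proof. by rewrite ffunE eqxx. Qed.

Lemma set_coord_off x i v j : j != i -> set_coord x i v j = x j.
Proof. by move=> ji; rewrite ffunE (negbTE ji). Qed.

Lemma agree_off_set_coord x i v : agree_off i x (set_coord x i v).
Proof. by move=> j ji; rewrite set_coord_off. Qed.

Lemma ffun_neq_at (x y : cube) j : x j != y j -> x != y.
Proof. by apply: contra => /eqP ->. Qed.

Lemma set_coord_neq (x : cube) i v : v != x i -> x != set_coord x i v.
Proof. by move=> vx; apply: (ffun_neq_at (j := i)); rewrite set_coord_at eq_sym. Qed.

Lemma ffun_neqP (x y : cube) : reflect (exists k, x k != y k) (x != y).
Proof.
apply: (iffP idP) => [xy | [k]]; last exact: ffun_neq_at.
apply/existsP; apply: contraR xy; rewrite negb_exists => /forallP eq_xy.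
by apply/eqP/ffunP => j; apply/eqP; rewrite -[_ == _]negbK eq_xy.
Qed.

Lemma tperm_agree_off_coord i (x y w : cube) j :
  agree_off i x y -> j != i -> tperm x y w j = w j.
Proof. by move=> xy ji; case: tpermP => // ->; rewrite xy. Qed.

Lemma tperm_fix_off i j (x y z : cube) :
  agree_off i x y -> j != i -> z j != x j -> tperm x y z = z.
Proof.
move=> xy ji zx; apply: tpermD; first by apply: (ffun_neq_at (j := j)); rewrite eq_sym.
by apply: (ffun_neq_at (j := j)); rewrite -xy // eq_sym.
Qed.

Lemma linked_agree_off i (x y u v : cube) :
  x != y -> u != v -> agree_off i x y -> agree_off i u v -> linked x y u v.
Proof.
move=> xy uv ixy iuv; apply: mem_gen.
rewrite inE Alt_even odd_permM !odd_tperm xy uv /=.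
apply/existsP; exists i; apply/forallP=> j; apply/forallP=> w; apply/implyP=> ji.
by rewrite permM (tperm_agree_off_coord _ iuv) // (tperm_agree_off_coord _ ixy).
Qed.

Lemma linked_sym (x y u v : cube) : linked x y u v -> linked u v x y.
Proof. by move/groupVr; rewrite invMg !tpermV. Qed.

Lemma linked_trans (x y u v w z : cube) :
  linked x y u v -> linked u v w z -> linked x y w z.
Proof.
move=> L1 L2; have := groupM L1 L2.
by rewrite -mulgA (mulgA (tperm u v)) tperm2 mul1g.
Qed.

Lemma linked_tpermC (x y u v : cube) : linked x y u v -> linked y x u v.
Proof. by rewrite /linked tpermC. Qed.

Lemma linked_conjg g (x y u v : cube) :
  g \in instr_group -> linked x y u v -> linked (g x) (g y) (g u) (g v).
Proof. by move=> Hg /groupJ /(_ Hg); rewrite conjMg !tpermJ. Qed.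

(* (x y) is the conjugate of (x z) by (z y), so (x y)(u v) = Q P^-1 Q
   with P = (x z)(u v) and Q = (z y)(u v). *)
Lemma linked_path (x y z u v : cube) :
  x != z -> y != z -> x != y ->
  linked x z u v -> linked z y u v -> linked x y u v.
Proof.
move=> xz yz xy P Q; rewrite /linked.
have -> : tperm x y = tperm x z ^ tperm z y.
  by rewrite tpermJ tpermD ?tpermL // eq_sym.
have -> : tperm x z ^ tperm z y * tperm u v =
          tperm z y * tperm u v * (tperm x z * tperm u v)^-1 * (tperm z y * tperm u v).
  by rewrite /conjg invMg !mulgA mulgK !tpermV.
by rewrite groupM // groupM // groupV.
Qed.

Lemma linked_conj_step g (x y u v : cube) :
  g \in instr_group -> g y = y -> g u = u -> g v = v ->
  x != y -> g x != x -> linked x y u v -> linked x (g x) u v.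
Proof.
move=> Hg gy gu gv xy gxx L.
have L' : linked (g x) y u v by have := linked_conjg Hg L; rewrite gy gu gv.
have gxy : g x != y by rewrite -gy (inj_eq perm_inj).
apply: linked_path (linked_tpermC L') => //; by rewrite eq_sym.
Qed.

Definition directions_linked := forall i j : 'I_n, i != j ->
  exists x y u v : cube,
    [/\ x != y, u != v, agree_off i x y, agree_off j u v & linked x y u v].

Hypothesis dirs : directions_linked.

Lemma linked_edges i j (x y u v : cube) :
  x != y -> u != v -> agree_off i x y -> agree_off j u v -> linked x y u v.
Proof.
move=> xy uv ixy juv; case: (eqVneq i j) ixy => [-> | ij] ixy.
  exact: linked_agree_off xy uv ixy juv.
have [x' [y' [u' [v' [xy' uv' ixy' juv' L]]]]] := dirs ij.
apply: linked_trans (linked_agree_off xy xy' ixy ixy') _.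
exact: linked_trans L (linked_agree_off uv' uv juv' juv).
Qed.

Lemma linked_to_edge i (u v : cube) : u != v -> agree_off i u v ->
  forall x y : cube, x != y -> linked x y u v.
Proof.
move=> uv iuv x y; move: {2}#|_| (leqnn #|[pred j | x j != y j]|) => d.
elim: d x => [|d IH] x dxy xy; have /ffun_neqP[k xyk] := xy.
  by move: dxy; rewrite leqn0 => /eqP/card0_eq/(_ k); rewrite inE xyk.
set z := set_coord x k (y k).
have xz : x != z by apply: (ffun_neq_at (j := k)); rewrite set_coord_at.
have kxz : agree_off k x z by exact: agree_off_set_coord.
have Lxz : linked x z u v := linked_edges xz uv kxz iuv.
have [<-|zy] := eqVneq z y; first exact: Lxz.
apply: (linked_path xz _ xy Lxz); first by rewrite eq_sym.
apply: IH zy; rewrite -ltnS; apply: leq_trans dxy; apply: proper_card.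
apply/properP; split; last by exists k; rewrite !inE // /z set_coord_at eqxx.
by apply/subsetP=> j; rewrite !inE /z ffunE; case: ifP => [/eqP ->|_]; rewrite ?eqxx.
Qed.

Lemma linked_all (x y u v : cube) : x != y -> u != v -> linked x y u v.
Proof.
move=> xy uv; have /ffun_neqP[k uvk] := uv; set w := set_coord u k (v k).
have uw : u != w by apply: (ffun_neq_at (j := k)); rewrite /w set_coord_at.
have kuw : agree_off k u w by exact: agree_off_set_coord.
apply: linked_trans (linked_to_edge uw kuw xy) _.
exact/linked_sym/(linked_to_edge uw kuw uv).
Qed.

Lemma prod_tperm_in (ts : seq (cube * cube)) : all dpair ts ->
  (~~ odd (size ts) -> \prod_(t <- ts) tperm t.1 t.2 \in instr_group) /\
  (odd (size ts) -> forall x y : cube, x != y ->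
     tperm x y * \prod_(t <- ts) tperm t.1 t.2 \in instr_group).
Proof.
elim: ts => [|[a b] ts IH] /=; first by rewrite big_nil group1.
case/andP=> /= ab /IH[even_in odd_in]; rewrite big_cons /=; split.
  by rewrite negbK => /odd_in; apply.
by move=> /even_in ts_in x y xy; rewrite mulgA; apply: groupM ts_in; apply: linked_all.
Qed.

Lemma Alt_instr_group : Alt cube = instr_group.
Proof.
apply/eqP; rewrite eqEsubset gen_subG; apply/andP; split; last first.
  by apply/subsetP=> f; rewrite inE => /andP[].
apply/subsetP=> s; rewrite Alt_even; case: (prod_tpermP s) => ts -> dts.
by rewrite odd_perm_prod //; apply: (prod_tperm_in dts).1.
Qed.

End InstructionGroup.

Lemma exists_neq (T : finType) : 1 < #|T| -> forall t : T, exists w, w != t.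
Proof.
case/card_gt1P=> x [y [_ _ xy]] t.
by have [<-|xt] := eqVneq x t; [exists y; rewrite eq_sym | exists x].
Qed.

Lemma exists_two_neq (T : finType) : 2 < #|T| -> forall t : T,
  exists w1 w2, [/\ w1 != t, w2 != t & w1 != w2].
Proof.
move=> hT t; have : 1 < #|predC1 t| by rewrite cardC1; lia.
by case/card_gt1P=> x [y [xt yt xy]]; exists x, y; split.
Qed.

Lemma exists_two_ord_off n : 3 < n -> forall i j : 'I_n, exists k l,
  [/\ k != i, k != j, l != i, l != j & k != l].
Proof.
move=> hn i j; have : 1 < #|~: [set i; j]|.
  by rewrite cardsCs setCK cards2 card_ord; case: (i != j); lia.
case/card_gt1P=> k [l []]; rewrite !inE !negb_or => /andP[ki kj] /andP[li lj] kl.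
by exists k, l.
Qed.

Section DirectionsLinked.

Variables (A : finType) (n : nat).

Local Notation cube := {ffun 'I_n -> A}.

Lemma directions_linked_card_gt2 : 2 < #|A| -> directions_linked A n.
Proof.
move=> hA i j ij; have ji : j != i by rewrite eq_sym.
have [t _] := card_gt0P (ltnW (ltnW hA)); pose a : cube := [ffun=> t].
have [w1 [w2 [w1a w2a w12]]] := exists_two_neq hA (a i).
have [v1 [v2 [v1a v2a v12]]] := exists_two_neq hA (a j).
pose b := set_coord a i w1; pose c := set_coord a i w2.
pose a1 := set_coord a j v1; pose a2 := set_coord a1 j v2.
have ab : a != b by apply: set_coord_neq.
have ac : a != c by apply: set_coord_neq.
have aa1 : a != a1 by apply: set_coord_neq.
have a12 : a1 != a2 by apply: set_coord_neq; rewrite /a1 set_coord_at eq_sym.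
have cb : c != b by apply: (ffun_neq_at (j := i)); rewrite /b /c !set_coord_at eq_sym.
have iab : agree_off i a b by exact: agree_off_set_coord.
have iac : agree_off i a c by exact: agree_off_set_coord.
pose g := tperm a b * tperm a c.
have gH : g \in instr_group A n by apply: linked_agree_off ab ac iab iac.
have g_fix (z : cube) : z j != a j -> g z = z.
  by move=> zj; rewrite permM !(tperm_fix_off _ ji zj).
have ga : g a = b by rewrite permM tpermL tpermD.
have L : linked a a1 a1 a2.
  by apply: (linked_agree_off (i := j)) aa1 a12 _ _; apply: agree_off_set_coord.
exists a, b, a1, a2; split=> //; try exact: agree_off_set_coord.
rewrite -ga; apply: linked_conj_step gH _ _ _ aa1 _ L; last by rewrite ga eq_sym.
all: by apply: g_fix; rewrite /a2 /a1 set_coord_at.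
Qed.

(* The spare coordinate k separates the two i-edges of g = (a ai)(b bi), and
   l moves the second j-edge (u uj) off both of them, so that g fixes it. *)
Lemma directions_linked_dim_gt3 : 1 < #|A| -> 3 < n -> directions_linked A n.
Proof.
move=> hA hn i j ij; have ji : j != i by rewrite eq_sym.
have [k [l [ki kj li lj kl]]] := exists_two_ord_off hn i j.
have ik : i != k by rewrite eq_sym.
have jl : j != l by rewrite eq_sym.
have lk : l != k by rewrite eq_sym.
have jk : j != k by rewrite eq_sym.
have [t _] := card_gt0P (ltnW hA); pose a : cube := [ffun=> t].
have [wi wia] := exists_neq hA (a i); have [wj wja] := exists_neq hA (a j).
have [wk wka] := exists_neq hA (a k); have [wl wla] := exists_neq hA (a l).
pose ai := set_coord a i wi; pose aj := set_coord a j wj.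
pose b := set_coord a k wk; pose bi := set_coord b i wi.
pose u := set_coord a l wl; pose uj := set_coord u j wj.
have aai : a != ai by apply: set_coord_neq.
have aaj : a != aj by apply: set_coord_neq.
have bbi : b != bi by apply: set_coord_neq; rewrite /b set_coord_off.
have uuj : u != uj by apply: set_coord_neq; rewrite /u set_coord_off.
have iaai : agree_off i a ai by exact: agree_off_set_coord.
have ibbi : agree_off i b bi by exact: agree_off_set_coord.
pose g := tperm a ai * tperm b bi.
have gH : g \in instr_group A n by apply: linked_agree_off aai bbi iaai ibbi.
have g_fix (z : cube) m : m != i -> m != k -> z m != a m -> g z = z.
  move=> mi mk zm; rewrite permM (tperm_fix_off iaai mi zm).
  by rewrite (tperm_fix_off ibbi mi) // /b set_coord_off.
have ga : g a = ai.
  by rewrite permM tpermL (tperm_fix_off ibbi ki) // /ai /b set_coord_off // set_coord_at eq_sym.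
have L : linked a aj u uj.
  by apply: (linked_agree_off (i := j)) aaj uuj _ _; apply: agree_off_set_coord.
exists a, ai, u, uj; split=> //; try exact: agree_off_set_coord.
rewrite -ga; apply: linked_conj_step gH _ _ _ aaj _ L; last by rewrite ga eq_sym.
- by apply: (g_fix _ j); rewrite // /aj set_coord_at.
- by apply: (g_fix _ l); rewrite // /u set_coord_at.
by apply: (g_fix _ l); rewrite // /uj /u set_coord_off // set_coord_at.
Qed.

End DirectionsLinked.

Theorem proposition2 (A : finType) (n : nat) :
  2 <= #|A| -> 2 <= n -> ~ (#|A| = 2 /\ (n = 2 \/ n = 3)) ->
  Alt {ffun 'I_n -> A} =
  <<[set f in Alt {ffun 'I_n -> A} | instruction f]>>%g.
Proof.
move=> A_ge2 n_ge2 not_exceptional; apply: Alt_instr_group.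
have [A_gt2 | A_le2] := ltnP 2 #|A|; first exact: directions_linked_card_gt2.
have n_gt3 : 3 < n.
  rewrite ltnNge; apply/negP => n_le3; apply: not_exceptional.
  split; first by apply/eqP; rewrite eqn_leq A_le2 A_ge2.
  by move: n_ge2 n_le3; case: n => [|[|[|[|m]]]] // _ _; [left | right].
exact: directions_linked_dim_gt3.
Qed.
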